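(* LFI3 is a sublogic of classical logic: for every set of formulas $\Gamma$ and formula $\alpha$, if $\Gamma\vDash_{LFI3}\alpha$ then $\Gamma\vDash_{CPL}\alpha$.
   Context: Formulas are built from a countable set of propositional variables using unary $\neg,\circ$ and binary $\land,\lor,\to$. On $\{0,1\}$ use Boolean $\land,\lor,\to,\sim$. Let $\mathbb{B}=\{x\in\{0,1\}^3: x_1\lor x_2=1,\ x_3\lor\sim(x_1\land x_2)=1\}=\{T,t,b,f,F\}$ with $T=(1,0,0)$, $t=(1,0,1)$, $b=(1,1,1)$, $f=(0,1,1)$, $F=(0,1,0)$. The LFI3 algebra on $\mathbb{B}$ has operations: $a\dot\land b=(a_1\land b_1,\ a_2\lor b_2,\ (\sim a_2\land b_3)\lor(a_3\land\sim b_2)\lor(a_3\land b_3))$; $a\dot\lor b=(a_1\lor b_1,\ a_2\land b_2,\ (\sim a_1\land b_3)\lor(a_3\land\sim b_1)\lor(a_3\land b_3))$; $a\dot\to b=(a_1\to b_1,\ b_2\land(\sim a_2\lor a_3),\ (\sim a_2\land b_3)\lor(\sim a_2\land a_3\land\sim b_1)\lor(a_3\land b_3)\lor(\sim a_1\land a_3\land\sim b_1))$; $\dot\neg a=(a_2,a_1,a_3)$; $\dot\circ a=(\sim(a_1\land a_2),a_3,a_3\land\sim(a_1\land a_2))$. Designated set $D=\{T,t,b\}$. Valuations are homomorphisms from formulas to this algebra; $\Gamma\vDash_{LFI3}\alpha$ iff every valuation with $h[\Gamma]\subseteq D$ has $h(\alpha)\in D$. Classical logic CPL over this signature is the matrix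 logic of the two-element subalgebra $\{T,F\}$ with designated set $\{T\}$ (i.e. the usual two-valued tables for $\neg,\land,\lor,\to$, with $\circ\alpha$ always true). *)

From Stdlib Require Import Bool.

Inductive formula : Type :=
| Var : nat -> formula
| Neg : formula -> formula
| Circ : formula -> formula
| And : formula -> formula -> formula
| Or : formula -> formula -> formula
| Imp : formula -> formula -> formula.

(* Boolean triples; the LFI3 universe B is the set of triples satisfying inB. *)
Definition triple := (bool * bool * bool)%type.
Definition p1 (a : triple) := fst (fst a).
Definition p2 (a : triple) := snd (fst a).
Definition p3 (a : triple) := snd a.
Definition bimp (x y : bool) := implb x y.

Definition inB (a : triple) : Prop :=
  orb (p1 a) (p2 a) = true /\ orb (p3 a) (negb (andb (p1 a) (p2 a))) = true.

Definition vT : triple := (true, false, false).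
Definition vt : triple := (true, false, true).
Definition vb : triple := (true, true, true).
Definition vf : triple := (false, true, true).
Definition vF : triple := (false, true, false).

Definition dand (a b : triple) : triple :=
  (p1 a && p1 b, p2 a || p2 b,
   (negb (p2 a) && p3 b) || (p3 a && negb (p2 b)) || (p3 a && p3 b)).
Definition dor (a b : triple) : triple :=
  (p1 a || p1 b, p2 a && p2 b,
   (negb (p1 a) && p3 b) || (p3 a && negb (p1 b)) || (p3 a && p3 b)).
Definition dimp (a b : triple) : triple :=
  (bimp (p1 a) (p1 b), p2 b && (negb (p2 a) || p3 a),
   (negb (p2 a) && p3 b) || (negb (p2 a) && p3 a && negb (p1 b))
   || (p3 a && p3 b) || (negb (p1 a) && p3 a && negb (p1 b))).
Definition dneg (a : triple) : triple := (p2 a, p1 a, p3 a).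
Definition dcirc (a : triple) : triple :=
  (negb (p1 a && p2 a), p3 a, p3 a && negb (p1 a && p2 a)).

Definition designated (a : triple) : Prop := a = vT \/ a = vt \/ a = vb.

Fixpoint eval3 (v : nat -> triple) (phi : formula) : triple :=
  match phi with
  | Var n => v n
  | Neg a => dneg (eval3 v a)
  | Circ a => dcirc (eval3 v a)
  | And a b => dand (eval3 v a) (eval3 v b)
  | Or a b => dor (eval3 v a) (eval3 v b)
  | Imp a b => dimp (eval3 v a) (eval3 v b)
  end.

(* An LFI3 valuation: a homomorphism from formulas into the algebra on B,
   i.e. the extension of an assignment of the variables into B. *)
Definition LFI3_consequence (Gamma : formula -> Prop) (alpha : formula) : Prop :=
  forall v : nat -> triple, (forall n, inB (v n)) ->
    (forall g, Gamma g -> designated (eval3 v g)) -> designated (eval3 v alpha).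

Fixpoint eval2 (v : nat -> bool) (phi : formula) : bool :=
  match phi with
  | Var n => v n
  | Neg a => negb (eval2 v a)
  | Circ a => true
  | And a b => eval2 v a && eval2 v b
  | Or a b => eval2 v a || eval2 v b
  | Imp a b => implb (eval2 v a) (eval2 v b)
  end.

Definition CPL_consequence (Gamma : formula -> Prop) (alpha : formula) : Prop :=
  forall v : nat -> bool,
    (forall g, Gamma g -> eval2 v g = true) -> eval2 v alpha = true.


(* Classical logic is the matrix of the subalgebra {T, F} of the LFI3 algebra,
   with designated set D ∩ {T, F} = {T}. Hence every classical valuation is an
   LFI3 valuation designating exactly the classically true formulas, and a
   classical countermodel to Gamma |= alpha is an LFI3 countermodel. *)

Definition triple_of_bool (x : bool) : triple := if x then vT else vF.

Lemma inB_triple_of_bool x : inB (triple_of_bool x).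
Proof. destruct x; split; reflexivity. Qed.

Lemma designated_triple_of_bool x : designated (triple_of_bool x) <-> x = true.
Proof.
  unfold designated; destruct x; split; auto; [| discriminate].
  intros [H | [H | H]]; discriminate.
Qed.

Lemma dneg_triple_of_bool x :
  dneg (triple_of_bool x) = triple_of_bool (negb x).
Proof. destruct x; reflexivity. Qed.

Lemma dcirc_triple_of_bool x : dcirc (triple_of_bool x) = triple_of_bool true.
Proof. destruct x; reflexivity. Qed.

Lemma dand_triple_of_bool x y :
  dand (triple_of_bool x) (triple_of_bool y) = triple_of_bool (x && y).
Proof. destruct x, y; reflexivity. Qed.

Lemma dor_triple_of_bool x y :
  dor (triple_of_bool x) (triple_of_bool y) = triple_of_bool (x || y).
Proof. destruct x, y; reflexivity. Qed.

Lemma dimp_triple_of_bool x y :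
  dimp (triple_of_bool x) (triple_of_bool y) = triple_of_bool (implb x y).
Proof. destruct x, y; reflexivity. Qed.

Lemma eval3_triple_of_bool (v : nat -> bool) (phi : formula) :
  eval3 (fun n => triple_of_bool (v n)) phi = triple_of_bool (eval2 v phi).
Proof.
  induction phi as [n | a IHa | a IHa | a IHa b IHb | a IHa b IHb | a IHa b IHb];
    simpl; try rewrite IHa; try rewrite IHb.
  - reflexivity.
  - apply dneg_triple_of_bool.
  - apply dcirc_triple_of_bool.
  - apply dand_triple_of_bool.
  - apply dor_triple_of_bool.
  - apply dimp_triple_of_bool.
Qed.

Lemma designated_eval3_triple_of_bool (v : nat -> bool) (phi : formula) :
  designated (eval3 (fun n => triple_of_bool (v n)) phi) <-> eval2 v phi = true.
Proof.
  rewrite eval3_triple_of_bool; apply designated_triple_of_bool.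
Qed.

Theorem theorem12 (Gamma : formula -> Prop) (alpha : formula) :
  LFI3_consequence Gamma alpha -> CPL_consequence Gamma alpha.
Proof.
  intros Hlfi3 v HGamma.
  apply designated_eval3_triple_of_bool, Hlfi3.
  - intro n; apply inB_triple_of_bool.
  - intros g Hg; apply designated_eval3_triple_of_bool, HGamma, Hg.
Qed.
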